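(* If $\Gamma$ is $\varepsilon$-free, $\Gamma\vdash^\varepsilon M:\tau$, and $\vdash^\varepsilon M\Downarrow R$, then $R=v$ for some $v\in V^\varepsilon$ with $\Gamma\vdash^\varepsilon v:\tau$. In particular, if $\tau=\triangleright_\alpha\tau_0$, then $v=\blacktriangleright_\alpha N$ for some $N$ with $\Gamma^{-\alpha}\vdash^\varepsilon N:\tau_0$.
   Context: MiniML. Transition variables $\alpha,\beta$; transitions $A,B$ are finite sequences of them ($\varepsilon$ empty). Types $\tau::=\mathbf{int}\mid\mathbf{bool}\mid\tau\to\tau\mid\triangleright_\alpha\tau\mid\forall\alpha.\tau$; terms $M ::= x\mid n\mid bv\mid M=M\mid M+M\mid M-M\mid M*M\mid \mathbf{if}\,M\,\mathbf{then}\,M\,\mathbf{else}\,M\mid \mathbf{fix}\,f{:}\tau\to\sigma.M\mid\lambda x{:}\tau.M\mid MM\mid\blacktriangleright_\alpha M\mid\blacktriangleleft_\alpha M\mid\Lambda\alpha.M\mid M\,A$ ($n\in\mathbb{Z}$, $bv\in\{\mathbf{true},\mathbf{false}\}$). For $B=\beta_1\cdots\beta_k$, $\triangleright_B\tau=\triangleright_{\beta_1}\cdots\triangleright_{\beta_k}\tau$, $\blacktriangleright_BM=\blacktriangleright_{\beta_1}\cdots\blacktriangleright_{\beta_k}M$, $\blacktriangleleft_BM=\blacktriangleleft_{\beta_k}\cdots\blacktriangleleft_{\beta_1}M$; $\tau[\alpha:=B]$, $M[\alpha:=B]$ are capture-avoiding, replacing $\alpha$ by $B$ in transitions and $\triangleright_\alpha,\blacktriangleright_\alpha,\blacktriangleleft_\alpha$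 by $\triangleright_B,\blacktriangleright_B,\blacktriangleleft_B$. A context $\Gamma$ is a finite set $\{x_i:\tau_i@A_i\}$ with distinct $x_i$; it is $\varepsilon$-free if $A\ne\varepsilon$ for every $x:\tau@A\in\Gamma$; $\Gamma^{-A}=\{x:\tau@B\mid x:\tau@AB\in\Gamma\}$. Typing $\Gamma\vdash^AM:\tau$: (Var) $x:\tau@A\in\Gamma\Rightarrow\Gamma\vdash^Ax:\tau$; (Abs),(App) standard at a fixed stage $A$ with the bound variable declared at stage $A$; (Quote) $\Gamma\vdash^{A\alpha}M:\tau\Rightarrow\Gamma\vdash^A\blacktriangleright_\alpha M:\triangleright_\alpha\tau$; (Unquote) $\Gamma\vdash^AM:\triangleright_\alpha\tau\Rightarrow\Gamma\vdash^{A\alpha}\blacktriangleleft_\alpha M:\tau$; (Gen) $\Gamma\vdash^AM:\tau$, $\alpha$ not free in $\Gamma$ or $A$ $\Rightarrow\Gamma\vdash^A\Lambda\alpha.M:\forall\alpha.\tau$; (Ins) $\Gamma\vdash^AM:\forall\alpha.\tau\Rightarrow\Gamma\vdash^AM\,B:\tau[\alpha:=B]$; integer/Boolean constants have types $\mathbf{int}$/$\mathbf{bool}$ at any stage; $+,-,*$ take two $\mathbf{int}$ to $\mathbf{int}$, $=$ two $\mathbf{int}$ to $\mathbf{bool}$; $\mathbf{if}$ takes $\mathbf{bool}$ and two branches of a common type $\tau$ to $\tau$; (Fix) $\Gamma,f:\tau\to\sigma@A\vdash^AM:\tau\to\sigma\Rightarrow\Gamma\vdash^A\mathbf{fix}\,f{:}\tau\to\sigma.M:\tau\to\sigma$.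 Values: $V^\varepsilon ::= n\mid\mathbf{true}\mid\mathbf{false}\mid\lambda x{:}\tau.M\mid\blacktriangleright_\alpha V^\alpha\mid\Lambda\alpha.V^\varepsilon$; for $A\ne\varepsilon$: $V^A::= x\mid n\mid\mathbf{true}\mid\mathbf{false}\mid\lambda x{:}\tau.V^A\mid\mathbf{fix}\,f{:}\tau\to\sigma.V^A\mid V^AV^A\mid\blacktriangleright_\alpha V^{A\alpha}\mid\Lambda\alpha.V^A\mid V^A\,B\mid\blacktriangleleft_\alpha V^{A'}$ (last only if $A'\alpha=A$, $A'\ne\varepsilon$). Big-step evaluation $\vdash^A M\Downarrow R$ ($R$ a term or $\mathbf{err}$), left-to-right call-by-value. At stage $\varepsilon$: constants and $\lambda$-abstractions evaluate to themselves; arithmetic/comparison operators compute on integer results; $\mathbf{if}$ evaluates the condition to $\mathbf{true}$/$\mathbf{false}$ then the corresponding branch; $MN\Downarrow R$ if $M\Downarrow\lambda x{:}\tau.M'$, $N\Downarrow v$, $M'[x:=v]\Downarrow R$; $\mathbf{fix}\,f{:}\tau\to\sigma.M\Downarrow R$ if $M[f:=\mathbf{fix}\,f{:}\tau\to\sigma.M]\Downarrow R$; $M\,B\Downarrow R$ if $M\Downarrow\Lambda\alpha.N$ and $N[\alpha:=B]\Downarrow R$. At any stage $A$: $\vdash^A\blacktriangleright_\alpha M\Downarrow\blacktriangleright_\alpha N$ if $\vdash^{A\alpha}M\Downarrow N$; $\vdash^A\Lambda\alpha.M\Downarrow\Lambda\alpha.N$ if $\vdash^AM\Downarrow N$. $\vdash^\alpha\blacktriangleleft_\alpha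 M\Downarrow N$ if $\vdash^\varepsilon M\Downarrow\blacktriangleright_\alpha N$; $\vdash^{A\alpha}\blacktriangleleft_\alpha M\Downarrow\blacktriangleleft_\alpha N$ if $A\ne\varepsilon$, $\vdash^AM\Downarrow N$. At stage $A\ne\varepsilon$ other constructors are rebuilt with subterms evaluated at stage $A$. $\mathbf{err}$ is produced at stage $\varepsilon$ by a variable, by an ill-shaped intermediate result (non-integer operand, non-Boolean condition, non-$\lambda$ function, non-$\Lambda$ operand of instantiation, non-$\blacktriangleright_\alpha$ operand of $\blacktriangleleft_\alpha$ at stage $\alpha$), by $\blacktriangleleft_\alpha M$ at stage $\varepsilon$, and propagates from any evaluated premise. *)

(* MiniML with transition variables, in de Bruijn representation
   (both term variables and transition variables are de Bruijn indices). *)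
From Stdlib Require Import List ZArith Bool Arith.
Import ListNotations.

Definition tvar := nat.
Definition trans := list tvar.

Inductive ty : Type :=
| TInt : ty
| TBool : ty
| TArr : ty -> ty -> ty
| TNext : tvar -> ty -> ty
| TAll : ty -> ty.              (* forall a. t ; binds transition index 0 *)

Inductive binop : Type := OEq | OPlus | OMinus | OTimes.

Inductive tm : Type :=
| Var : nat -> tm
| Int : Z -> tm
| Bool : bool -> tm
| Op : binop -> tm -> tm -> tm
| If : tm -> tm -> tm -> tm
| Fix : ty -> ty -> tm -> tm            (* fix f : t -> s. M ; binds term index 0 *)
| Lam : ty -> tm -> tm                  (* \x : t. M ; binds term index 0 *)
| App : tm -> tm -> tm
| Quote : tvar -> tm -> tm
| Unquote : tvar -> tm -> tm
| TLam : tm -> tm                       (* Lambda a. M ; binds transition index 0 *)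
| TApp : tm -> trans -> tm.

Fixpoint nexts (B : trans) (t : ty) : ty :=
  match B with [] => t | b :: B' => TNext b (nexts B' t) end.
Fixpoint quotes (B : trans) (M : tm) : tm :=
  match B with [] => M | b :: B' => Quote b (quotes B' M) end.
Definition unquotes (B : trans) (M : tm) : tm :=
  fold_left (fun acc b => Unquote b acc) B M.

Definition shv (d : nat) (i : tvar) : tvar := if d <=? i then S i else i.

(* substitute transition index d by B (B given relative to depth 0),
   decrementing indices above d *)
Definition tsv (d : nat) (B : trans) (i : tvar) : trans :=
  if i <? d then [i]
  else if i =? d then map (fun b => b + d) B
  else [i - 1].

Fixpoint tshift_ty (d : nat) (t : ty) : ty :=
  match t with
  | TInt => TInt | TBool => TBool
  | TArr t1 t2 => TArr (tshift_ty d t1) (tshift_ty d t2)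
  | TNext a t1 => TNext (shv d a) (tshift_ty d t1)
  | TAll t1 => TAll (tshift_ty (S d) t1)
  end.

Fixpoint tsubst_ty (d : nat) (B : trans) (t : ty) : ty :=
  match t with
  | TInt => TInt | TBool => TBool
  | TArr t1 t2 => TArr (tsubst_ty d B t1) (tsubst_ty d B t2)
  | TNext a t1 => nexts (tsv d B a) (tsubst_ty d B t1)
  | TAll t1 => TAll (tsubst_ty (S d) B t1)
  end.

Fixpoint tshift_tm (d : nat) (M : tm) : tm :=
  match M with
  | Var x => Var x | Int n => Int n | Bool b => Bool b
  | Op o M1 M2 => Op o (tshift_tm d M1) (tshift_tm d M2)
  | If M1 M2 M3 => If (tshift_tm d M1) (tshift_tm d M2) (tshift_tm d M3)
  | Fix t1 t2 M1 => Fix (tshift_ty d t1) (tshift_ty d t2) (tshift_tm d M1)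
  | Lam t M1 => Lam (tshift_ty d t) (tshift_tm d M1)
  | App M1 M2 => App (tshift_tm d M1) (tshift_tm d M2)
  | Quote a M1 => Quote (shv d a) (tshift_tm d M1)
  | Unquote a M1 => Unquote (shv d a) (tshift_tm d M1)
  | TLam M1 => TLam (tshift_tm (S d) M1)
  | TApp M1 B => TApp (tshift_tm d M1) (map (shv d) B)
  end.

Fixpoint tsubst_tm (d : nat) (B : trans) (M : tm) : tm :=
  match M with
  | Var x => Var x | Int n => Int n | Bool b => Bool b
  | Op o M1 M2 => Op o (tsubst_tm d B M1) (tsubst_tm d B M2)
  | If M1 M2 M3 => If (tsubst_tm d B M1) (tsubst_tm d B M2) (tsubst_tm d B M3)
  | Fix t1 t2 M1 => Fix (tsubst_ty d B t1) (tsubst_ty d B t2) (tsubst_tm d B M1)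
  | Lam t M1 => Lam (tsubst_ty d B t) (tsubst_tm d B M1)
  | App M1 M2 => App (tsubst_tm d B M1) (tsubst_tm d B M2)
  | Quote a M1 => quotes (tsv d B a) (tsubst_tm d B M1)
  | Unquote a M1 => unquotes (tsv d B a) (tsubst_tm d B M1)
  | TLam M1 => TLam (tsubst_tm (S d) B M1)
  | TApp M1 C => TApp (tsubst_tm d B M1) (flat_map (tsv d B) C)
  end.

Fixpoint shift_tm (c : nat) (M : tm) : tm :=
  match M with
  | Var x => Var (if c <=? x then S x else x)
  | Int n => Int n | Bool b => Bool b
  | Op o M1 M2 => Op o (shift_tm c M1) (shift_tm c M2)
  | If M1 M2 M3 => If (shift_tm c M1) (shift_tm c M2) (shift_tm c M3)
  | Fix t1 t2 M1 => Fix t1 t2 (shift_tm (S c) M1)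
  | Lam t M1 => Lam t (shift_tm (S c) M1)
  | App M1 M2 => App (shift_tm c M1) (shift_tm c M2)
  | Quote a M1 => Quote a (shift_tm c M1)
  | Unquote a M1 => Unquote a (shift_tm c M1)
  | TLam M1 => TLam (shift_tm c M1)
  | TApp M1 B => TApp (shift_tm c M1) B
  end.

Fixpoint subst_tm (k : nat) (v : tm) (M : tm) : tm :=
  match M with
  | Var x => if x =? k then v else if k <? x then Var (x - 1) else Var x
  | Int n => Int n | Bool b => Bool b
  | Op o M1 M2 => Op o (subst_tm k v M1) (subst_tm k v M2)
  | If M1 M2 M3 => If (subst_tm k v M1) (subst_tm k v M2) (subst_tm k v M3)
  | Fix t1 t2 M1 => Fix t1 t2 (subst_tm (S k) (shift_tm 0 v) M1)
  | Lam t M1 => Lam t (subst_tm (S k) (shift_tm 0 v) M1)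
  | App M1 M2 => App (subst_tm k v M1) (subst_tm k v M2)
  | Quote a M1 => Quote a (subst_tm k v M1)
  | Unquote a M1 => Unquote a (subst_tm k v M1)
  | TLam M1 => TLam (subst_tm k (tshift_tm 0 v) M1)
  | TApp M1 B => TApp (subst_tm k v M1) B
  end.

(* A context maps the term index x to [Some (t, A)] (x : t @ A) or [None]
   (x not declared). *)
Definition ctx := list (option (ty * trans)).

Definition eps_free (G : ctx) : Prop :=
  forall x t A, nth_error G x = Some (Some (t, A)) -> A <> [].

Fixpoint strip_prefix (A B : trans) : option trans :=
  match A, B with
  | [], _ => Some B
  | a :: A', b :: B' => if Nat.eqb a b then strip_prefix A' B' else None
  | _ :: _, [] => None
  end.

(* G^{-A} = { x : t @ B | x : t @ AB in G } *)
Definition ctx_minus (A : trans) (G : ctx) : ctx :=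
  map (fun e => match e with
                | Some (t, C) =>
                    match strip_prefix A C with
                    | Some B => Some (t, B)
                    | None => None
                    end
                | None => None
                end) G.

Definition ctx_tshift (G : ctx) : ctx :=
  map (fun e => match e with
                | Some (t, A) => Some (tshift_ty 0 t, map (shv 0) A)
                | None => None
                end) G.

Definition op_res_ty (o : binop) : ty :=
  match o with OEq => TBool | _ => TInt end.

Definition op_res (o : binop) (n1 n2 : Z) : tm :=
  match o with
  | OEq => Bool (Z.eqb n1 n2)
  | OPlus => Int (n1 + n2)
  | OMinus => Int (n1 - n2)
  | OTimes => Int (n1 * n2)
  end.

Inductive has_type : ctx -> trans -> tm -> ty -> Prop :=
| T_Var : forall G A x t,
    nth_error G x = Some (Some (t, A)) -> has_type G A (Var x) t
| T_Int : forall G A n, has_type G A (Int n) TInt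
| T_Bool : forall G A b, has_type G A (Bool b) TBool
| T_Op : forall G A o M N,
    has_type G A M TInt -> has_type G A N TInt ->
    has_type G A (Op o M N) (op_res_ty o)
| T_If : forall G A M N1 N2 t,
    has_type G A M TBool -> has_type G A N1 t -> has_type G A N2 t ->
    has_type G A (If M N1 N2) t
| T_Fix : forall G A t s M,
    has_type (Some (TArr t s, A) :: G) A M (TArr t s) ->
    has_type G A (Fix t s M) (TArr t s)
| T_Abs : forall G A t s M,
    has_type (Some (t, A) :: G) A M s -> has_type G A (Lam t M) (TArr t s)
| T_App : forall G A M N t s,
    has_type G A M (TArr t s) -> has_type G A N t -> has_type G A (App M N) s
| T_Quote : forall G A a M t,
    has_type G (A ++ [a]) M t -> has_type G A (Quote a M) (TNext a t)
| T_Unquote : forall G A a M t,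
    has_type G A M (TNext a t) -> has_type G (A ++ [a]) (Unquote a M) t
| T_Gen : forall G A M t,
    (* the bound variable is fresh for G and A: de Bruijn shift *)
    has_type (ctx_tshift G) (map (shv 0) A) M t -> has_type G A (TLam M) (TAll t)
| T_Ins : forall G A M t B,
    has_type G A M (TAll t) -> has_type G A (TApp M B) (tsubst_ty 0 B t).

Inductive value : trans -> tm -> Prop :=
| V_Int : forall A n, value A (Int n)
| V_Bool : forall A b, value A (Bool b)
| V_Lam0 : forall t M, value [] (Lam t M)
| V_Quote : forall A a M, value (A ++ [a]) M -> value A (Quote a M)
| V_TLam : forall A M, value (map (shv 0) A) M -> value A (TLam M)
| VA_Var : forall A x, A <> [] -> value A (Var x)
| VA_Lam : forall A t M, A <> [] -> value A M -> value A (Lam t M)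
| VA_Fix : forall A t s M, A <> [] -> value A M -> value A (Fix t s M)
| VA_App : forall A M N, A <> [] -> value A M -> value A N -> value A (App M N)
| VA_Op : forall A o M N, A <> [] -> value A M -> value A N -> value A (Op o M N)
| VA_If : forall A M N1 N2, A <> [] -> value A M -> value A N1 -> value A N2 ->
    value A (If M N1 N2)
| VA_TApp : forall A M B, A <> [] -> value A M -> value A (TApp M B)
| VA_Unquote : forall A a M, A <> [] -> value A M -> value (A ++ [a]) (Unquote a M).

Inductive res : Type := Ok (t : tm) | Err.

Inductive eval : trans -> tm -> res -> Prop :=
| E_Int : forall A n, eval A (Int n) (Ok (Int n))
| E_Bool : forall A b, eval A (Bool b) (Ok (Bool b))
| E_Lam0 : forall t M, eval [] (Lam t M) (Ok (Lam t M))
| E_Var0 : forall x, eval [] (Var x) Err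
| E_Op0 : forall o M N n1 n2,
    eval [] M (Ok (Int n1)) -> eval [] N (Ok (Int n2)) ->
    eval [] (Op o M N) (Ok (op_res o n1 n2))
| E_Op0Err1 : forall o M N, eval [] M Err -> eval [] (Op o M N) Err
| E_Op0Err2 : forall o M N v,
    eval [] M (Ok v) -> (forall n, v <> Int n) -> eval [] (Op o M N) Err
| E_Op0Err3 : forall o M N n1,
    eval [] M (Ok (Int n1)) -> eval [] N Err -> eval [] (Op o M N) Err
| E_Op0Err4 : forall o M N n1 w,
    eval [] M (Ok (Int n1)) -> eval [] N (Ok w) -> (forall n, w <> Int n) ->
    eval [] (Op o M N) Err
| E_If0True : forall M N1 N2 R,
    eval [] M (Ok (Bool true)) -> eval [] N1 R -> eval [] (If M N1 N2) R
| E_If0False : forall M N1 N2 R,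
    eval [] M (Ok (Bool false)) -> eval [] N2 R -> eval [] (If M N1 N2) R
| E_If0Err1 : forall M N1 N2, eval [] M Err -> eval [] (If M N1 N2) Err
| E_If0Err2 : forall M N1 N2 v,
    eval [] M (Ok v) -> (forall b, v <> Bool b) -> eval [] (If M N1 N2) Err
| E_App0 : forall M N t M' v R,
    eval [] M (Ok (Lam t M')) -> eval [] N (Ok v) -> eval [] (subst_tm 0 v M') R ->
    eval [] (App M N) R
| E_App0Err1 : forall M N, eval [] M Err -> eval [] (App M N) Err
| E_App0Err2 : forall M N v,
    eval [] M (Ok v) -> (forall t M', v <> Lam t M') -> eval [] (App M N) Err
| E_App0Err3 : forall M N t M',
    eval [] M (Ok (Lam t M')) -> eval [] N Err -> eval [] (App M N) Err
| E_Fix0 : forall t s M R,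
    eval [] (subst_tm 0 (Fix t s M) M) R -> eval [] (Fix t s M) R
| E_TApp0 : forall M B N R,
    eval [] M (Ok (TLam N)) -> eval [] (tsubst_tm 0 B N) R -> eval [] (TApp M B) R
| E_TApp0Err1 : forall M B, eval [] M Err -> eval [] (TApp M B) Err
| E_TApp0Err2 : forall M B v,
    eval [] M (Ok v) -> (forall N, v <> TLam N) -> eval [] (TApp M B) Err
| E_Quote : forall A a M N,
    eval (A ++ [a]) M (Ok N) -> eval A (Quote a M) (Ok (Quote a N))
| E_QuoteErr : forall A a M, eval (A ++ [a]) M Err -> eval A (Quote a M) Err
| E_TLam : forall A M N,
    eval (map (shv 0) A) M (Ok N) -> eval A (TLam M) (Ok (TLam N))
| E_TLamErr : forall A M, eval (map (shv 0) A) M Err -> eval A (TLam M) Err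
| E_Unquote0 : forall a M, eval [] (Unquote a M) Err
| E_Unquote1 : forall a M N,
    eval [] M (Ok (Quote a N)) -> eval [a] (Unquote a M) (Ok N)
| E_Unquote1Err1 : forall a M, eval [] M Err -> eval [a] (Unquote a M) Err
| E_Unquote1Err2 : forall a M v,
    eval [] M (Ok v) -> (forall N, v <> Quote a N) -> eval [a] (Unquote a M) Err
| E_UnquoteA : forall A a M N,
    A <> [] -> eval A M (Ok N) -> eval (A ++ [a]) (Unquote a M) (Ok (Unquote a N))
| E_UnquoteAErr : forall A a M,
    A <> [] -> eval A M Err -> eval (A ++ [a]) (Unquote a M) Err
| E_VarA : forall A x, A <> [] -> eval A (Var x) (Ok (Var x))
| E_OpA : forall A o M N M' N',
    A <> [] -> eval A M (Ok M') -> eval A N (Ok N') -> eval A (Op o M N) (Ok (Op o M' N'))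
| E_OpAErr1 : forall A o M N, A <> [] -> eval A M Err -> eval A (Op o M N) Err
| E_OpAErr2 : forall A o M N M',
    A <> [] -> eval A M (Ok M') -> eval A N Err -> eval A (Op o M N) Err
| E_IfA : forall A M N1 N2 M' N1' N2',
    A <> [] -> eval A M (Ok M') -> eval A N1 (Ok N1') -> eval A N2 (Ok N2') ->
    eval A (If M N1 N2) (Ok (If M' N1' N2'))
| E_IfAErr1 : forall A M N1 N2, A <> [] -> eval A M Err -> eval A (If M N1 N2) Err
| E_IfAErr2 : forall A M N1 N2 M',
    A <> [] -> eval A M (Ok M') -> eval A N1 Err -> eval A (If M N1 N2) Err
| E_IfAErr3 : forall A M N1 N2 M' N1',
    A <> [] -> eval A M (Ok M') -> eval A N1 (Ok N1') -> eval A N2 Err ->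
    eval A (If M N1 N2) Err
| E_LamA : forall A t M M',
    A <> [] -> eval A M (Ok M') -> eval A (Lam t M) (Ok (Lam t M'))
| E_LamAErr : forall A t M, A <> [] -> eval A M Err -> eval A (Lam t M) Err
| E_FixA : forall A t s M M',
    A <> [] -> eval A M (Ok M') -> eval A (Fix t s M) (Ok (Fix t s M'))
| E_FixAErr : forall A t s M, A <> [] -> eval A M Err -> eval A (Fix t s M) Err
| E_AppA : forall A M N M' N',
    A <> [] -> eval A M (Ok M') -> eval A N (Ok N') -> eval A (App M N) (Ok (App M' N'))
| E_AppAErr1 : forall A M N, A <> [] -> eval A M Err -> eval A (App M N) Err
| E_AppAErr2 : forall A M N M',
    A <> [] -> eval A M (Ok M') -> eval A N Err -> eval A (App M N) Err
| E_TAppA : forall A M B M',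
    A <> [] -> eval A M (Ok M') -> eval A (TApp M B) (Ok (TApp M' B))
| E_TAppAErr : forall A M B, A <> [] -> eval A M Err -> eval A (TApp M B) Err.

(* Soundness is proved by induction on evaluation, for all stages at once: a term
   typed at stage A evaluates to a value of its type at stage A.  The beta, fix and
   instantiation steps need substitution lemmas for term variables and for
   transition variables; the latter is proved once for a simultaneous substitution
   of transitions for all transition variables, of which de Bruijn shifting and
   single substitution are instances.  Error results are excluded by canonical
   forms, and by eps-freeness, which leaves no variable typeable at stage eps.
   Finally, in a value [Quote a N] the body N is a value at stage a, so it contains
   no unquote reaching stage eps, and its typing survives deleting the leading a
   from every stage. *)

From Stdlib Require Import List ZArith Lia.
Import ListNotations.

(** * Simultaneous substitution of transitions *)

Definition tsub_up (s : nat -> trans) : nat -> trans :=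
  fun i => match i with 0 => [0] | S j => map S (s j) end.

Fixpoint ty_tsub (s : nat -> trans) (t : ty) : ty :=
  match t with
  | TInt => TInt | TBool => TBool
  | TArr t1 t2 => TArr (ty_tsub s t1) (ty_tsub s t2)
  | TNext a t1 => nexts (s a) (ty_tsub s t1)
  | TAll t1 => TAll (ty_tsub (tsub_up s) t1)
  end.

Fixpoint tm_tsub (s : nat -> trans) (M : tm) : tm :=
  match M with
  | Var x => Var x | Int n => Int n | Bool b => Bool b
  | Op o M1 M2 => Op o (tm_tsub s M1) (tm_tsub s M2)
  | If M1 M2 M3 => If (tm_tsub s M1) (tm_tsub s M2) (tm_tsub s M3)
  | Fix t1 t2 M1 => Fix (ty_tsub s t1) (ty_tsub s t2) (tm_tsub s M1)
  | Lam t M1 => Lam (ty_tsub s t) (tm_tsub s M1)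
  | App M1 M2 => App (tm_tsub s M1) (tm_tsub s M2)
  | Quote a M1 => quotes (s a) (tm_tsub s M1)
  | Unquote a M1 => unquotes (s a) (tm_tsub s M1)
  | TLam M1 => TLam (tm_tsub (tsub_up s) M1)
  | TApp M1 C => TApp (tm_tsub s M1) (flat_map s C)
  end.

Definition ctx_tsub (s : nat -> trans) (G : ctx) : ctx :=
  map (fun e => match e with
                | Some (t, A) => Some (ty_tsub s t, flat_map s A)
                | None => None
                end) G.

Definition tsub_comp (s r : nat -> trans) : nat -> trans :=
  fun i => flat_map s (r i).

Definition tsub_shift (d : nat) : nat -> trans := fun i => [shv d i].

Lemma tsub_up_ext s r : (forall i, s i = r i) -> forall i, tsub_up s i = tsub_up r i.
Proof. intros E [|i]; simpl; rewrite ?E; reflexivity. Qed.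

Lemma ty_tsub_ext t : forall s r, (forall i, s i = r i) -> ty_tsub s t = ty_tsub r t.
Proof.
  induction t; intros s r E; simpl;
    rewrite ?E, ?(IHt1 s r E), ?(IHt2 s r E), ?(IHt s r E),
      ?(IHt _ _ (tsub_up_ext s r E)); reflexivity.
Qed.

Lemma tm_tsub_ext M : forall s r, (forall i, s i = r i) -> tm_tsub s M = tm_tsub r M.
Proof.
  induction M; intros s r E; simpl;
    rewrite ?E, ?(ty_tsub_ext _ s r E), ?(IHM1 s r E), ?(IHM2 s r E), ?(IHM3 s r E),
      ?(IHM s r E), ?(IHM _ _ (tsub_up_ext s r E)), ?(flat_map_ext _ _ E);
    reflexivity.
Qed.

Lemma nexts_app A B t : nexts (A ++ B) t = nexts A (nexts B t).
Proof. induction A; simpl; congruence. Qed.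

Lemma ty_tsub_nexts s A t : ty_tsub s (nexts A t) = nexts (flat_map s A) (ty_tsub s t).
Proof. induction A; simpl; rewrite ?nexts_app; congruence. Qed.

Lemma flat_map_map {X Y Z} (f : Y -> list Z) (g : X -> Y) l :
  flat_map f (map g l) = flat_map (fun x => f (g x)) l.
Proof. induction l; simpl; congruence. Qed.

Lemma flat_map_singleton {X Y} (f : X -> Y) l : flat_map (fun x => [f x]) l = map f l.
Proof. induction l; simpl; congruence. Qed.

Lemma map_flat_map {X Y Z} (f : Y -> Z) (g : X -> list Y) l :
  map f (flat_map g l) = flat_map (fun x => map f (g x)) l.
Proof. induction l; simpl; rewrite ?map_app; congruence. Qed.

Lemma tsub_up_comp s r i :
  tsub_up (tsub_comp s r) i = tsub_comp (tsub_up s) (tsub_up r) i.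
Proof.
  destruct i; unfold tsub_comp; simpl; [reflexivity|].
  rewrite flat_map_map, map_flat_map. reflexivity.
Qed.

Lemma ty_tsub_comp t : forall s r, ty_tsub s (ty_tsub r t) = ty_tsub (tsub_comp s r) t.
Proof.
  induction t; intros s r; simpl; rewrite ?ty_tsub_nexts, ?IHt1, ?IHt2, ?IHt;
    try reflexivity.
  f_equal. apply ty_tsub_ext. intro i. symmetry. apply tsub_up_comp.
Qed.

Lemma ty_tsub_id t : forall s, (forall i, s i = [i]) -> ty_tsub s t = t.
Proof.
  induction t; intros s E; simpl; rewrite ?E, ?(IHt1 s E), ?(IHt2 s E), ?(IHt s E);
    try reflexivity.
  rewrite IHt; [reflexivity|]. intros [|i]; simpl; rewrite ?E; reflexivity.
Qed.

Lemma tsub_up_shift d i : tsub_up (tsub_shift d) i = tsub_shift (S d) i.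
Proof. destruct i; unfold tsub_shift, shv; simpl; [|destruct (d <=? i)]; reflexivity. Qed.

Lemma tsub_up_tsv d B i : tsub_up (tsv d B) i = tsv (S d) B i.
Proof.
  destruct i as [|i]; [reflexivity|]. unfold tsv; cbn [tsub_up].
  change (S i <? S d) with (i <? d); change (S i =? S d) with (i =? d).
  destruct (Nat.ltb_spec i d), (Nat.eqb_spec i d); cbn [map]; try reflexivity.
  - rewrite map_map. apply map_ext. intro; lia.
  - do 2 f_equal. lia.
Qed.

Lemma tshift_ty_tsub t : forall d, tshift_ty d t = ty_tsub (tsub_shift d) t.
Proof.
  induction t; intros d; simpl; rewrite ?IHt1, ?IHt2, ?IHt; try reflexivity.
  f_equal. apply ty_tsub_ext. intro; symmetry; apply tsub_up_shift.
Qed.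

Lemma tsubst_ty_tsub t : forall d B, tsubst_ty d B t = ty_tsub (tsv d B) t.
Proof.
  induction t; intros d B; simpl; rewrite ?IHt1, ?IHt2, ?IHt; try reflexivity.
  f_equal. apply ty_tsub_ext. intro; symmetry; apply tsub_up_tsv.
Qed.

Lemma tshift_tm_tsub M : forall d, tshift_tm d M = tm_tsub (tsub_shift d) M.
Proof.
  induction M; intros d; simpl;
    rewrite ?tshift_ty_tsub, ?IHM1, ?IHM2, ?IHM3, ?IHM, ?flat_map_singleton;
    try reflexivity.
  f_equal. apply tm_tsub_ext. intro; symmetry; apply tsub_up_shift.
Qed.

Lemma tsubst_tm_tsub M : forall d B, tsubst_tm d B M = tm_tsub (tsv d B) M.
Proof.
  induction M; intros d B; simpl; rewrite ?tsubst_ty_tsub, ?IHM1, ?IHM2, ?IHM3, ?IHM;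
    try reflexivity.
  f_equal. apply tm_tsub_ext. intro; symmetry; apply tsub_up_tsv.
Qed.


Lemma flat_map_tsub_up_shift s A :
  flat_map (tsub_up s) (map (shv 0) A) = map (shv 0) (flat_map s A).
Proof. rewrite flat_map_map, map_flat_map. reflexivity. Qed.

Lemma flat_map_tsv_shift B A : flat_map (tsv 0 B) (map (shv 0) A) = A.
Proof.
  induction A as [|a A IH]; [reflexivity|]. simpl. rewrite IH.
  unfold tsv. simpl. rewrite Nat.sub_0_r. reflexivity.
Qed.

Lemma ty_tsub_up_tshift s t :
  ty_tsub (tsub_up s) (tshift_ty 0 t) = tshift_ty 0 (ty_tsub s t).
Proof.
  rewrite !tshift_ty_tsub, !ty_tsub_comp. apply ty_tsub_ext. intro i.
  unfold tsub_comp, tsub_shift. simpl. rewrite app_nil_r, flat_map_singleton. reflexivity.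
Qed.

Lemma ty_tsubst_tshift B t : tsubst_ty 0 B (tshift_ty 0 t) = t.
Proof.
  rewrite tsubst_ty_tsub, tshift_ty_tsub, ty_tsub_comp. apply ty_tsub_id. intro i.
  unfold tsub_comp, tsub_shift, tsv. simpl. rewrite Nat.sub_0_r. reflexivity.
Qed.

Lemma map_add_0 (A : trans) : map (fun b => b + 0) A = A.
Proof. rewrite <- (map_id A) at 2. apply map_ext. intro; lia. Qed.

Lemma ty_tsub_tsubst s B t :
  ty_tsub s (tsubst_ty 0 B t) = tsubst_ty 0 (flat_map s B) (ty_tsub (tsub_up s) t).
Proof.
  rewrite !tsubst_ty_tsub, !ty_tsub_comp. apply ty_tsub_ext.
  intros [|i]; unfold tsub_comp, tsv; simpl; rewrite app_nil_r.
  - rewrite !map_add_0. reflexivity.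
  - rewrite Nat.sub_0_r, flat_map_map. simpl.
    rewrite (flat_map_ext _ (fun x => [x])) by (intro; rewrite Nat.sub_0_r; reflexivity).
    rewrite flat_map_singleton, map_id. reflexivity.
Qed.

Lemma ctx_tsub_shift G : ctx_tsub (tsub_shift 0) G = ctx_tshift G.
Proof.
  apply map_ext. intros [[t A]|]; [|reflexivity].
  rewrite <- tshift_ty_tsub. unfold tsub_shift. rewrite flat_map_singleton. reflexivity.
Qed.

Lemma ctx_tsub_up_tshift s G :
  ctx_tsub (tsub_up s) (ctx_tshift G) = ctx_tshift (ctx_tsub s G).
Proof.
  unfold ctx_tsub, ctx_tshift. rewrite !map_map. apply map_ext.
  intros [[t A]|]; [|reflexivity].
  rewrite ty_tsub_up_tshift, flat_map_tsub_up_shift. reflexivity.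
Qed.

Lemma ctx_tsubst_tshift B G : ctx_tsub (tsv 0 B) (ctx_tshift G) = G.
Proof.
  unfold ctx_tsub, ctx_tshift. rewrite map_map. etransitivity; [|apply map_id].
  apply map_ext.
  intros [[t A]|]; [|reflexivity].
  rewrite <- tsubst_ty_tsub, ty_tsubst_tshift, flat_map_tsv_shift. reflexivity.
Qed.

Lemma has_type_quotes G A B M t :
  has_type G (A ++ B) M t -> has_type G A (quotes B M) (nexts B t).
Proof.
  revert A; induction B as [|b B IH]; intros A HM; simpl.
  - rewrite app_nil_r in HM. exact HM.
  - constructor. apply IH. rewrite <- app_assoc. exact HM.
Qed.

Lemma has_type_unquotes G B : forall A M t,
  has_type G A M (nexts B t) -> has_type G (A ++ B) (unquotes B M) t.
Proof.
  induction B as [|b B IH]; intros A M t HM; simpl.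
  - rewrite app_nil_r. exact HM.
  - replace (A ++ b :: B) with ((A ++ [b]) ++ B) by (rewrite <- app_assoc; reflexivity).
    apply IH. constructor. exact HM.
Qed.

Lemma has_type_tm_tsub G A M t : has_type G A M t -> forall sg,
  has_type (ctx_tsub sg G) (flat_map sg A) (tm_tsub sg M) (ty_tsub sg t).
Proof.
  induction 1; intros sg; simpl.
  - constructor. unfold ctx_tsub. rewrite (map_nth_error _ _ _ H). reflexivity.
  - constructor.
  - constructor.
  - replace (ty_tsub sg (op_res_ty o)) with (op_res_ty o) by (destruct o; reflexivity).
    constructor; auto.
  - constructor; auto.
  - constructor. apply (IHhas_type sg).
  - constructor. apply (IHhas_type sg).
  - econstructor; [apply (IHhas_type1 sg) | apply IHhas_type2].
  - apply has_type_quotes.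
    specialize (IHhas_type sg). rewrite flat_map_app in IHhas_type. simpl in IHhas_type.
    rewrite app_nil_r in IHhas_type. exact IHhas_type.
  - rewrite flat_map_app. simpl. rewrite app_nil_r. apply has_type_unquotes, IHhas_type.
  - constructor. rewrite <- ctx_tsub_up_tshift, <- flat_map_tsub_up_shift. apply IHhas_type.
  - rewrite ty_tsub_tsubst. constructor. apply IHhas_type.
Qed.

Lemma has_type_tshift G A M t :
  has_type G A M t -> has_type (ctx_tshift G) (map (shv 0) A) (tshift_tm 0 M) (tshift_ty 0 t).
Proof.
  intros HM. rewrite <- ctx_tsub_shift, <- flat_map_singleton, tshift_tm_tsub, tshift_ty_tsub.
  apply has_type_tm_tsub, HM.
Qed.

Lemma has_type_tsubst G A M t B :
  has_type (ctx_tshift G) (map (shv 0) A) M t ->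
  has_type G A (tsubst_tm 0 B M) (tsubst_ty 0 B t).
Proof.
  intros HM. rewrite <- (ctx_tsubst_tshift B G), <- (flat_map_tsv_shift B A).
  rewrite tsubst_tm_tsub, tsubst_ty_tsub. apply has_type_tm_tsub, HM.
Qed.

(** * Substitution of terms *)

Definition ctx_insertion (c : nat) (G G' : ctx) : Prop :=
  forall x, nth_error G' (if c <=? x then S x else x) = nth_error G x.

Definition ctx_removal (k : nat) (G G' : ctx) : Prop :=
  (forall x, x < k -> nth_error G' x = nth_error G x) /\
  (forall x, k < x -> nth_error G' (x - 1) = nth_error G x).

Lemma ctx_insertion_head e G : ctx_insertion 0 G (e :: G).
Proof. intro x. reflexivity. Qed.

Lemma ctx_insertion_cons c e G G' :
  ctx_insertion c G G' -> ctx_insertion (S c) (e :: G) (e :: G').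
Proof. intros HG [|x]; simpl; [reflexivity|]. specialize (HG x). destruct (c <=? x); exact HG. Qed.

Lemma ctx_insertion_tshift c G G' :
  ctx_insertion c G G' -> ctx_insertion c (ctx_tshift G) (ctx_tshift G').
Proof. intros HG x. unfold ctx_tshift. rewrite !nth_error_map, HG. reflexivity. Qed.

Lemma ctx_removal_head e G : ctx_removal 0 (e :: G) G.
Proof. split; intros [|x] Hx; simpl; try lia. rewrite Nat.sub_0_r. reflexivity. Qed.

Lemma ctx_removal_cons k e G G' :
  ctx_removal k G G' -> ctx_removal (S k) (e :: G) (e :: G').
Proof.
  intros [HL HR]; split; intros [|x] Hx; simpl; try reflexivity; try lia.
  - apply HL. lia.
  - destruct x as [|x]; [lia|]. rewrite <- HR by lia. simpl. rewrite Nat.sub_0_r. reflexivity.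
Qed.

Lemma ctx_removal_tshift k G G' :
  ctx_removal k G G' -> ctx_removal k (ctx_tshift G) (ctx_tshift G').
Proof.
  intros [HL HR]; split; intros x Hx; unfold ctx_tshift; rewrite !nth_error_map;
    [rewrite HL | rewrite HR]; auto.
Qed.

Lemma has_type_shift_tm G A M t : has_type G A M t ->
  forall c G', ctx_insertion c G G' -> has_type G' A (shift_tm c M) t.
Proof.
  induction 1; intros c G' HG; simpl; econstructor;
    eauto using ctx_insertion_cons, ctx_insertion_tshift.
  rewrite HG. exact H.
Qed.

Lemma has_type_subst_tm G A M t : has_type G A M t ->
  forall k v s B G', nth_error G k = Some (Some (s, B)) -> has_type G' B v s ->
  ctx_removal k G G' -> has_type G' A (subst_tm k v M) t.
Proof.
  induction 1; intros k v s' B' G' Hk Hv HG; simpl.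
  - destruct HG as [HL HR].
    destruct (Nat.eqb_spec x k) as [->|Hne]; [congruence|].
    destruct (Nat.ltb_spec k x); constructor; [rewrite HR | rewrite HL]; auto; lia.
  - constructor.
  - constructor.
  - constructor; eauto.
  - constructor; eauto.
  - constructor. eapply IHhas_type; eauto using ctx_removal_cons.
    eapply has_type_shift_tm; eauto using ctx_insertion_head.
  - constructor. eapply IHhas_type; eauto using ctx_removal_cons.
    eapply has_type_shift_tm; eauto using ctx_insertion_head.
  - econstructor; eauto.
  - constructor; eauto.
  - constructor; eauto.
  - constructor.
    apply IHhas_type with (s := tshift_ty 0 s') (B := map (shv 0) B');
      auto using ctx_removal_tshift, has_type_tshift.
    exact (map_nth_error _ _ _ Hk).
  - constructor; eauto.
Qed.

(** * Soundness of evaluation *)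

Lemma snoc_neq_nil {X} (A : list X) a : A ++ [a] <> [].
Proof. destruct A; discriminate. Qed.

Lemma snoc_eq_singleton {X} (A : list X) a b : A ++ [a] = [b] -> A = [] /\ a = b.
Proof.
  intros E. destruct A as [|c A]; inversion E; [auto|].
  exfalso. eapply snoc_neq_nil. eassumption.
Qed.

Ltac simplify_stages :=
  repeat match goal with
  | H : _ ++ [_] = [] |- _ => destruct (snoc_neq_nil _ _ H)
  | H : [] = _ ++ [_] |- _ => destruct (snoc_neq_nil _ _ (eq_sym H))
  | H : _ ++ [_] = [_] |- _ => apply snoc_eq_singleton in H as [? ?]; subst
  | H : _ ++ [_] = _ ++ [_] |- _ => apply app_inj_tail in H as [? ?]; subst
  end.

Lemma canonical_forms G v t : value [] v -> has_type G [] v t ->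
  match t with
  | TInt => exists n, v = Int n
  | TBool => exists b, v = Bool b
  | TArr _ _ => exists t' M, v = Lam t' M
  | TNext a _ => exists N, v = Quote a N
  | TAll _ => exists N, v = TLam N
  end.
Proof.
  intros Hv Ht; inversion Hv; subst; simplify_stages; try congruence;
    inversion Ht; subst; eauto.
Qed.

Lemma eps_free_cons G t A : eps_free G -> A <> [] -> eps_free (Some (t, A) :: G).
Proof. intros HG HA [|x] t' A' Hx; simpl in Hx; [congruence | eapply HG, Hx]. Qed.

Lemma eps_free_tshift G : eps_free G -> eps_free (ctx_tshift G).
Proof.
  (* Unfolding [ctx] and [trans] makes the implicit type arguments of [nth_error]
     syntactically equal, which [destruct] needs to abstract the lookup. *)
  intros HG x t A. unfold ctx_tshift, ctx, trans in *. rewrite nth_error_map.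
  destruct (nth_error G x) as [[[t' A']|]|] eqn:E; intro Hx; inversion Hx; subst.
  apply HG in E. destruct A'; [contradiction | discriminate].
Qed.

Ltac apply_eval_ih :=
  repeat match goal with
  | IH : forall G t, eps_free G -> has_type G ?A ?M t -> _,
    HM : has_type ?G ?A ?M ?t |- _ =>
      let E := fresh "E" in
      destruct (IH G t ltac:(eauto using eps_free_tshift, eps_free_cons) HM)
        as [? [E [? ?]]];
      clear IH; first [discriminate E | injection E as <- | subst]
  end.

Ltac refute_by_canonical_form :=
  match goal with
  | Hv : value [] ?v, Hvt : has_type _ [] ?v _ |- _ =>
      let C := fresh in
      pose proof (canonical_forms _ _ _ Hv Hvt) as C; simpl in C;
      repeat match type of C with ex _ => destruct C as [? C] end; subst;
      match goal with
      | Hn : forall _, _ <> _ |- _ => exfalso; eapply Hn; reflexivity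
      | Hn : forall _ _, _ <> _ |- _ => exfalso; eapply Hn; reflexivity
      end
  end.

Lemma eval_sound A M R : eval A M R -> forall G t, eps_free G -> has_type G A M t ->
  exists v, R = Ok v /\ value A v /\ has_type G A v t.
Proof.
  induction 1; intros G T HG HT; inversion HT; subst; simplify_stages; apply_eval_ih.
  all: cbn [app] in *.
  all: try solve [eexists; repeat split; econstructor; eauto].
  all: try solve [eexists; repeat split; eauto].
  (* The remaining errors are a variable at stage eps, impossible in an eps-free
     context, and stuck terms, impossible by canonical forms. *)
  all: try solve [exfalso; eapply HG; eauto].
  all: try refute_by_canonical_form.
  - exists (op_res o n1 n2). destruct o; repeat constructor.
  - match goal with H : has_type _ [] (Lam _ _) _ |- _ => inversion H; subst end.
    apply IHeval3; [exact HG|].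
    eapply has_type_subst_tm; eauto using ctx_removal_head. reflexivity.
  - apply IHeval; [exact HG|].
    eapply has_type_subst_tm; eauto using ctx_removal_head. reflexivity.
  - match goal with H : has_type _ [] (TLam _) _ |- _ => inversion H; subst end.
    apply IHeval2; [exact HG|]. apply has_type_tsubst with (A := []). assumption.
  - match goal with H : has_type _ [] (Quote _ _) _ |- _ => inversion H; subst end.
    match goal with H : value [] (Quote _ _) |- _ => inversion H; subst end.
    eauto.
Qed.

(** * Removing the first stage *)

Lemma ctx_minus_tshift a G :
  ctx_minus [shv 0 a] (ctx_tshift G) = ctx_tshift (ctx_minus [a] G).
Proof.
  unfold ctx_minus, ctx_tshift. rewrite !map_map. apply map_ext.
  intros [[t [|c C]]|]; simpl; [reflexivity | | reflexivity].
  destruct (Nat.eqb a c); reflexivity.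
Qed.

Lemma ctx_minus_cons a A t G :
  ctx_minus [a] (Some (t, a :: A) :: G) = Some (t, A) :: ctx_minus [a] G.
Proof. simpl. rewrite Nat.eqb_refl. reflexivity. Qed.

(* Without [value B N] this fails for [Unquote b M] at stage [[b]], whose subterm M
   lives at stage eps. *)
Lemma has_type_ctx_minus G B N t : has_type G B N t ->
  forall a A, B = a :: A -> value B N -> has_type (ctx_minus [a] G) A N t.
Proof.
  induction 1; intros a0 A0 EB HN; subst; inversion HN; subst; simplify_stages.
  - constructor. unfold ctx_minus. erewrite map_nth_error by eassumption.
    simpl. rewrite Nat.eqb_refl. reflexivity.
  - constructor.
  - constructor.
  - constructor; eauto.
  - constructor; eauto.
  - constructor. rewrite <- ctx_minus_cons. eauto.
  - constructor. rewrite <- ctx_minus_cons. eauto.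
  - econstructor; eauto.
  - constructor. eapply IHhas_type; eauto.
  - destruct A as [|c A]; [contradiction|]. injection EB as <- <-. constructor. eauto.
  - constructor. rewrite <- ctx_minus_tshift. eauto.
  - constructor. eauto.
Qed.

Theorem mainTheorem13 :
  forall (G : ctx) (M : tm) (t : ty) (R : res),
    eps_free G ->
    has_type G [] M t ->
    eval [] M R ->
    exists v : tm,
      R = Ok v /\ value [] v /\ has_type G [] v t /\
      (forall (a : tvar) (t0 : ty),
          t = TNext a t0 ->
          exists N : tm, v = Quote a N /\ has_type (ctx_minus [a] G) [] N t0).
Proof.
  intros G M t R HG HM HR.
  destruct (eval_sound _ _ _ HR G t HG HM) as [v [-> [Hv Hvt]]].
  exists v. split; [reflexivity|]. split; [exact Hv|]. split; [exact Hvt|].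
  intros a t0 ->.
  destruct (canonical_forms _ _ _ Hv Hvt) as [N ->].
  exists N. split; [reflexivity|].
  inversion Hvt; subst. inversion Hv; subst.
  eapply has_type_ctx_minus; eauto.
Qed.
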